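(* Let $K\ge1$ and let $h_1,\dots,h_K>0$. Let $\pi$ be a permutation of $\{1,\dots,K\}$ such that $h_{\pi(j_1)}\le h_{\pi(j_2)}$ for all $j_1\le j_2$. Define $$E_{\mathrm{STAC}}=\sum_{j=1}^K\Big(\frac{2^{j-1}}{h_{\pi(j)}}\Big)^2,\qquad E_{\mathrm{SEP}}=\frac1K\sum_{i=1}^K\sum_{j=1}^K\Big(\frac{2^{j-1}}{h_i}\Big)^2.$$ Then $E_{\mathrm{SEP}}\ge E_{\mathrm{STAC}}$, and equality holds only when $h_1=h_2=\dots=h_K$.
   Context: $h_i$ is the (real, positive) channel gain from node $i$ to the receiver. $E_{\mathrm{STAC}}$ is the total energy when node $\pi(j)$ transmits with weight $2^{j-1}$ (power $(2^{j-1}/h_{\pi(j)})^2$) for unit time; $E_{\mathrm{SEP}}$ is the total energy when each node transmits separately for time $1/K$ with power $\sum_{j}(2^{j-1}/h_i)^2$. *)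

From mathcomp Require Import all_boot all_order all_algebra all_fingroup.
Set Implicit Arguments. Unset Strict Implicit. Unset Printing Implicit Defensive.
Import Order.TTheory GRing.Theory Num.Theory.
Local Open Scope ring_scope.

(* Indices are 0-based: j : 'I_K stands for the paper's j+1, so the weight
   2^{(j+1)-1} becomes 2^j. *)
Definition E_STAC (R : realFieldType) (K : nat) (h : 'I_K -> R)
  (pi : {perm 'I_K}) : R :=
  \sum_(j < K) ((2%:R ^+ j) / h (pi j)) ^+ 2.

Definition E_SEP (R : realFieldType) (K : nat) (h : 'I_K -> R) : R :=
  K%:R^-1 * \sum_(i < K) \sum_(j < K) ((2%:R ^+ j) / h i) ^+ 2.

From mathcomp Require Import all_boot all_order all_algebra all_fingroup.
From mathcomp Require Import ring.
Import Order.TTheory GRing.Theory Num.Theory.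
Local Open Scope ring_scope.

(* Reindexing the double sum of E_SEP along pi gives
   E_SEP = K^-1 (sum_j 4^j) (sum_j h_(pi j)^-2) and E_STAC = sum_j 4^j h_(pi j)^-2.
   Since 4^j increases and h_(pi j)^-2 decreases in j, Chebyshev's sum
   inequality gives E_STAC <= E_SEP.  Its defect is a double sum of the
   nonpositive terms (4^j - 4^k)(h_(pi j)^-2 - h_(pi k)^-2), so equality kills
   each of them; as j |-> 4^j is injective, h is constant. *)

Lemma sum_diff_mul_diff (R : comPzRingType) (I : finType) (a c : I -> R) :
  \sum_j \sum_k (a j - a k) * (c j - c k) =
  2%:R * (#|I|%:R * \sum_j a j * c j - (\sum_j a j) * (\sum_j c j)).
Proof.
have expand j k : (a j - a k) * (c j - c k) =
    (a j * c j + a k * c k) - (a j * c k + a k * c j) by ring.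
have diag_l : \sum_(j : I) \sum_(k : I) a j * c j = #|I|%:R * \sum_j a j * c j.
  by rewrite mulr_sumr; apply: eq_bigr => j _; rewrite sumr_const mulr_natl.
have diag_r : \sum_(j : I) \sum_(k : I) a k * c k = #|I|%:R * \sum_j a j * c j.
  by rewrite sumr_const mulr_natl.
have cross : \sum_(j : I) \sum_(k : I) a j * c k = (\sum_j a j) * \sum_j c j.
  by rewrite mulr_suml; apply: eq_bigr => j _; rewrite mulr_sumr.
under eq_bigr => j _ do under eq_bigr => k _ do rewrite expand.
under eq_bigr => j _ do rewrite sumrB !big_split /=.
rewrite sumrB !big_split /= diag_l diag_r [X in _ - (_ + X)]exchange_big /=.
by rewrite cross; ring.
Qed.

Section Chebyshev.
Context {R : numDomainType} {I : finType} {a c : I -> R}.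
Hypothesis opposite : forall j k, (a j - a k) * (c j - c k) <= 0.

Lemma chebyshev_sum_le :
  #|I|%:R * \sum_j a j * c j <= (\sum_j a j) * (\sum_j c j).
Proof.
have : \sum_j \sum_k (a j - a k) * (c j - c k) <= 0.
  by apply: sumr_le0 => j _; apply: sumr_le0.
by rewrite sum_diff_mul_diff pmulr_rle0 ?ltr0n // subr_le0.
Qed.

Lemma chebyshev_sum_eq :
  #|I|%:R * \sum_j a j * c j = (\sum_j a j) * (\sum_j c j) ->
  forall j k, (a j - a k) * (c j - c k) = 0.
Proof.
move=> eq_sums j k.
have sum0 : \sum_j \sum_k - ((a j - a k) * (c j - c k)) = 0.
  under eq_bigr => i _ do rewrite sumrN.
  by rewrite sumrN sum_diff_mul_diff eq_sums subrr mulr0 oppr0.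
have term_ge0 i l : 0 <= - ((a i - a l) * (c i - c l)) by rewrite oppr_ge0.
have row0 := psumr_eq0P (fun i _ => sumr_ge0 _ (fun l _ => term_ge0 i l)) sum0.
by apply/eqP; rewrite -oppr_eq0 (psumr_eq0P (fun l _ => term_ge0 j l) (row0 j _)).
Qed.

End Chebyshev.

Lemma monotone_opposite (R : numDomainType) (n : nat) (a c : 'I_n -> R) :
  (forall j k : 'I_n, (j <= k)%N -> a j <= a k) ->
  (forall j k : 'I_n, (j <= k)%N -> c k <= c j) ->
  forall j k, (a j - a k) * (c j - c k) <= 0.
Proof.
move=> a_incr c_decr j k.
wlog jk : j k / (j <= k)%N.
  by move=> le; case: (leqP j k) => [|/ltnW] /le //; rewrite -mulrNN !opprB.
by apply: mulr_le0_ge0; rewrite ?subr_le0 ?subr_ge0 ?a_incr ?c_decr.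
Qed.

Lemma E_STAC_sum {R : realFieldType} {K : nat} (h : 'I_K -> R)
    (pi : {perm 'I_K}) :
  E_STAC h pi = \sum_(j < K) 4%:R ^+ j * (h (pi j))^-1 ^+ 2.
Proof. by apply: eq_bigr => j _; rewrite exprMn exprAC -(natrX _ 2 2). Qed.

Lemma E_SEP_sum {R : realFieldType} {K : nat} (h : 'I_K -> R)
    (pi : {perm 'I_K}) :
  E_SEP h =
  K%:R^-1 * ((\sum_(j < K) 4%:R ^+ j) * \sum_j (h (pi j))^-1 ^+ 2).
Proof.
rewrite /E_SEP (reindex_inj (@perm_inj _ pi)) /= mulr_suml exchange_big /=.
congr (_ * _); apply: eq_bigr => i _; rewrite mulr_sumr.
by apply: eq_bigr => j _; rewrite exprMn exprAC -(natrX _ 2 2).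
Qed.

Theorem theorem4 (R : realFieldType) (K : nat) (hK : (1 <= K)%N)
  (h : 'I_K -> R) (hpos : forall i, 0 < h i) (pi : {perm 'I_K})
  (hsort : forall j1 j2 : 'I_K, (j1 <= j2)%N -> h (pi j1) <= h (pi j2)) :
  E_STAC h pi <= E_SEP h /\
  (E_SEP h = E_STAC h pi -> forall i1 i2 : 'I_K, h i1 = h i2).
Proof.
pose a (j : 'I_K) : R := 4%:R ^+ j.
pose c (j : 'I_K) : R := (h (pi j))^-1 ^+ 2.
have inv_ge0 j : 0 <= (h (pi j))^-1 by rewrite invr_ge0 ltW.
have opposite : forall j k, (a j - a k) * (c j - c k) <= 0.
  apply: monotone_opposite => j k jk; first by rewrite ler_eXn2l ?ltr1n.
  by rewrite ler_pXn2r ?nnegrE // lef_pV2 ?posrE ?hsort.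
have cheb := chebyshev_sum_le opposite; rewrite card_ord in cheb.
rewrite E_STAC_sum (E_SEP_sum _ pi) ler_pdivlMl ?ltr0n //; split=> // eq_E.
have K_neq0 : K%:R != 0 :> R by rewrite pnatr_eq0 -lt0n.
have c_const j k : c j = c k.
  have := chebyshev_sum_eq opposite; rewrite card_ord -eq_E (mulVKf K_neq0).
  move=> /(_ erefl j k) /eqP; rewrite mulf_eq0 !subr_eq0 => /orP[|/eqP //].
  by rewrite eq_le !ler_eXn2l ?ltr1n // -eqn_leq => /eqP/val_inj->.
move=> i1 i2; rewrite -(permKV pi i1) -(permKV pi i2).
apply: invr_inj; apply/eqP; rewrite -(eqrXn2 (n:=2)) //.
exact/eqP/c_const.
Qed.
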